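(* For every integer $n\ge 2$, $\theta_{n-1}(\ell_\infty,\ell_\infty)=\sqrt{n}^{\,n}$, i.e. $\max\{\|C_{n-1}(B)\|_\infty : B\in\mathbb{C}^{n\times n},\ \|\mathrm{col}_i(B)\|_\infty=1,\ i=1,\ldots,n\}=n^{n/2}$.
   Context: $C_k(B)$ is the $k$th compound of $B$: the $\binom nk\times\binom nk$ matrix of all $k\times k$ minors $\det B(\alpha|\beta)$, indexed by $k$-subsets of $\{1,\ldots,n\}$. $\mathrm{col}_i(B)$ is the $i$th column. $\|\cdot\|_\infty$ is the max-modulus vector norm and, for matrices, the induced operator norm (maximum absolute row sum). $\theta_k(\mu,\nu)=\max\{\mu(C_k(B)): \nu(\mathrm{col}_i(B))=1\ \forall i\}$. *)

From HB Require Import structures.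
From mathcomp Require Import all_boot all_order all_algebra.
From mathcomp Require Import complex.
From mathcomp Require Import reals.
Set Implicit Arguments. Unset Strict Implicit. Unset Printing Implicit Defensive.
Import Order.TTheory GRing.Theory Num.Theory.
Local Open Scope ring_scope.

Section Compound.
Variable R : realType.
Local Notation C := R[i].

Definition cmod (z : C) : R := ComplexField.Normc.normc z.

Definition vnorm_inf m (v : 'cV[C]_m) : R := \big[Num.max/0]_(i < m) cmod (v i 0).

(* induced operator norm ||A||_oo = maximum absolute row sum *)
Definition mxnorm_inf m p (A : 'M[C]_(m, p)) : R :=
  \big[Num.max/0]_(i < m) \sum_(j < p) cmod (A i j).

(* the k-subsets of {1..n} (here {0..n-1}), used as index set *)
Definition ksets (n k : nat) : {set {set 'I_n}} := [set A : {set 'I_n} | #|A| == k].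

(* the k x k minor det B(a|b): rows a, columns b, both listed increasingly *)
Definition minor n k (B : 'M[C]_n) (a b : {set 'I_n}) : C :=
  \det (\matrix_(i < k, j < k)
          nth 0 [seq nth 0 [seq B r c | c <- enum b] j | r <- enum a] i).

(* the k-th compound matrix C_k(B), indexed by k-subsets of {0..n-1}
   (the index type has #|ksets n k| = binomial n k elements) *)
Definition compound n k (B : 'M[C]_n) : 'M[C]_(#|ksets n k|) :=
  \matrix_(i, j) minor k B (enum_val i) (enum_val j).

Definition unit_cols n (B : 'M[C]_n) : Prop := forall i : 'I_n, vnorm_inf (col i B) = 1.

End Compound.

(* Deleting row r and column c of B leaves, up to sign, the cofactor (r, c), so each row of
   C_{n-1}(B) lists the moduli of the cofactors along one row r of B.  Replacing row r of B by
   the phases of these cofactors gives a matrix with entries of modulus at most 1 whose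
   determinant is that row sum; Hadamard's inequality |det M|^2 <= n^n, obtained from AM-GM
   on the eigenvalues of M M^*, bounds it by n^(n/2).  For the Fourier matrix F = (w^(ij)),
   w a primitive n-th root of unity, F F^* = n I gives |det F| = n^(n/2) and
   n |cofactor| = |det F| for every cofactor, so every row sum of C_{n-1}(F) is n^(n/2). *)

From HB Require Import structures.
From mathcomp Require Import all_boot all_order all_algebra.
From mathcomp Require Import complex reals.
From mathcomp Require Import zify.
From mathcomp Require Import sesquilinear spectral.
From mathcomp Require Import cyclic separable cyclotomic.
Set Implicit Arguments. Unset Strict Implicit. Unset Printing Implicit Defensive.
Import Order.TTheory GRing.Theory Num.Theory Num.Def.
Local Open Scope ring_scope.
Local Open Scope sesquilinear_scope.

Lemma enum_setC1 n (r : 'I_n) : enum [set~ r] = map (lift r) (enum 'I_n.-1).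
Proof.
have lt_trans : transitive (fun x y : 'I_n => (x < y)%N) by move=> ? ? ?; apply: ltn_trans.
have sorted_ord m : sorted (fun x y : 'I_m => (x < y)%N) (enum 'I_m).
  by have := iota_ltn_sorted 0 m; rewrite -val_enum_ord sorted_map.
apply: (irr_sorted_eq lt_trans (fun x => ltnn x)).
- by rewrite /enum_mem -enumT; apply: sorted_filter (sorted_ord n).
- rewrite sorted_map; apply: sub_sorted (sorted_ord n.-1).
  by move=> x y; rewrite /= !ltnNge leq_bump2.
- move=> x; rewrite mem_enum in_setC1; apply/idP/mapP.
  + by rewrite eq_sym => /unlift_some [j -> _]; exists j; rewrite ?mem_enum.
  + by case=> j _ ->; rewrite eq_sym neq_lift.
Qed.

Lemma ksets_predn n : (0 < n)%N -> ksets n n.-1 = [set [set~ c] | c : 'I_n].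
Proof.
move=> n_gt0; apply/setP => b; rewrite inE; apply/idP/imsetP => [|[c _ ->]].
  move=> /eqP card_b.
  have /cards1P [c bC] : #|~: b| == 1%N.
    by have := cardsC b; rewrite card_b card_ord; lia.
  by exists c => //; rewrite -bC setCK.
by rewrite cardsC1 card_ord.
Qed.

Section Hadamard.
Variable C : numClosedFieldType.

Lemma det_normalmx N (A : 'M[C]_N) :
  A \is normalmx -> \det A = \prod_i spectral_diag A 0 i.
Proof.
move=> /orthomx_spectralP {1}->.
by rewrite !det_mulmx det_inv det_diag mulrC mulrA mulrV ?mul1r // -unitmxE spectral_unit.
Qed.

Lemma mxtrace_normalmx N (A : 'M[C]_N) :
  A \is normalmx -> \tr A = \sum_i spectral_diag A 0 i.
Proof.
move=> /orthomx_spectralP {1}->.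
rewrite mxtrace_mulC mulmxA mulmxV ?spectral_unit // mul1mx.
by apply: eq_bigr => i _; rewrite mxE eqxx mulr1n.
Qed.

Lemma gram_normalmx m N (M : 'M[C]_(N, m)) : M *m M^t* \is normalmx.
Proof. by apply/normalmxP; rewrite trmx_mul map_mxM trmxCK. Qed.

Lemma spectral_diag_gram_ge0 m N (M : 'M[C]_(N, m)) i :
  0 <= spectral_diag (M *m M^t*) 0 i.
Proof.
set G := M *m M^t*; set P := spectralmx G.
have P_unitary : P \is unitarymx := spectral_unitarymx G.
have dE : diag_mx (spectral_diag G) = (P *m M) *m (P *m M)^t*.
  rewrite trmx_mul map_mxM !mulmxA -(mulmxA P M) -/G -(invmx_unitary P_unitary).
  have /orthomx_spectralP GE : G \is normalmx := gram_normalmx M.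
  rewrite [in RHS]GE !mulmxA mulmxV ?spectral_unit // mul1mx.
  by rewrite -mulmxA mulmxV ?spectral_unit // mulmx1.
have := congr1 (fun A : 'M[C]_N => A i i) dE; rewrite !mxE eqxx mulr1n => ->.
by apply: sumr_ge0 => k _; rewrite !mxE mul_conjC_ge0.
Qed.

Lemma mxtrace_gram m N (M : 'M[C]_(N, m)) :
  \tr (M *m M^t*) = \sum_i \sum_j `|M i j| ^+ 2.
Proof.
by apply: eq_bigr => i _; rewrite mxE; apply: eq_bigr => j _; rewrite !mxE normCK.
Qed.

Lemma det_gram_le m N (M : 'M[C]_(N, m)) :
  \det (M *m M^t*) <= (\tr (M *m M^t*) / N%:R) ^+ N.
Proof.
rewrite det_normalmx ?mxtrace_normalmx ?gram_normalmx //.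
have := (leif_AGM (A := predT) (fun i _ => spectral_diag_gram_ge0 M i)).1.
by rewrite cardT size_enum_ord.
Qed.

Lemma hadamard_bound N (M : 'M[C]_N) :
  (forall i j, `|M i j| <= 1) -> `|\det M| ^+ 2 <= N%:R ^+ N.
Proof.
move=> M_le1; have detG : \det (M *m M^t*) = `|\det M| ^+ 2.
  by rewrite det_mulmx det_map_mx det_tr normCK.
have trG : \tr (M *m M^t*) <= N%:R * N%:R.
  apply: (@le_trans _ _ (\sum_(i < N) \sum_(j < N) (1 : C))).
    by rewrite mxtrace_gram; do 2!apply: ler_sum => ? _; rewrite expr_le1 ?M_le1.
  by rewrite !sumr_const card_ord mulr_natr.
have trG0 : 0 <= \tr (M *m M^t*).
  by rewrite mxtrace_gram; do 2!apply: sumr_ge0 => ? _; rewrite exprn_ge0.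
rewrite -detG (le_trans (det_gram_le M)) //.
apply: lerXn2r; rewrite ?nnegrE ?divr_ge0 ?ler0n //.
have [N0|N_gt0] := posnP N; last by rewrite ler_pdivrMr ?ltr0n.
by rewrite [X in X%:R]N0 invr0 mulr0.
Qed.

Lemma sum_norm_cofactor_le N (B : 'M[C]_N) r :
  (forall i j, `|B i j| <= 1) -> (\sum_c `|cofactor B r c|) ^+ 2 <= N%:R ^+ N.
Proof.
(* The phase |x| / x is 0 at x = 0, since 0^-1 = 0. *)
move=> B_le1.
pose M := \matrix_(i, j) if i == r then `|cofactor B r j| / cofactor B r j else B i j.
have cofM c : cofactor M r c = cofactor B r c.
  rewrite /cofactor; congr (_ * \det _); apply/matrixP => i j.
  by rewrite !mxE eq_sym (negbTE (neq_lift r i)).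
have M_le1 i j : `|M i j| <= 1.
  rewrite mxE; case: ifP => // _; rewrite normrM normfV normr_id.
  by have [->|/divff->] := eqVneq `|cofactor B r j| 0; rewrite ?mul0r.
have detM : \det M = \sum_c `|cofactor B r c|.
  rewrite (expand_det_row _ r); apply: eq_bigr => c _; rewrite cofM mxE eqxx.
  by have [->|/divfK->] := eqVneq (cofactor B r c) 0; rewrite ?normr0 ?mul0r ?mulr0.
by rewrite -detM -[\det M]ger0_norm ?hadamard_bound // detM sumr_ge0.
Qed.

End Hadamard.

Lemma prim_root_exists (F : closedFieldType) N :
  (N%:R : F) != 0 -> exists w : F, N.-primitive_root w.
Proof.
move=> N_neq0; have N_gt0 : (0 < N)%N by rewrite lt0n; apply: contraNneq N_neq0 => ->.
have [r Dp] := closed_field_poly_normal ('X^N - 1 : {poly F}).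
rewrite (monicP _) ?monicXnsubC // scale1r in Dp.
have rN1 : all N.-unity_root r by apply/allP=> z; rewrite -root_prod_XsubC -Dp.
have size_r : (N < (size r).+1)%N by rewrite -(size_prod_XsubC r id) -Dp size_XnsubC.
have [|z] := hasP (has_prim_root N_gt0 rN1 _ size_r); last by exists z.
by rewrite -separable_prod_XsubC -Dp separable_Xn_sub_1.
Qed.

Lemma sum_expr_unity_root (R : idomainType) (x : R) N :
  x ^+ N = 1 -> x != 1 -> \sum_(k < N) x ^+ k = 0.
Proof.
move=> xN x_neq1; have /eqP := subrX1 x N.
by rewrite xN subrr eq_sym mulf_eq0 subr_eq0 (negbTE x_neq1) => /eqP.
Qed.

Section GramScalar.
Variable C : numClosedFieldType.
Variables (N : nat) (A : 'M[C]_N) (a : C).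
Hypothesis AA : A *m A^t* = a%:M.

Lemma gram_scalar_norm_det : `|\det A| ^+ 2 = a ^+ N.
Proof.
by rewrite normCK -det_map_mx -(det_tr (map_mx conjC A)) map_trmx -det_mulmx AA det_scalar.
Qed.

Lemma gram_scalar_norm_cofactor r c :
  `|a| * `|cofactor A r c| = `|\det A| * `|A r c|.
Proof.
have adjA : a *: \adj A = \det A *: A^t*.
  by rewrite -mul_mx_scalar -AA mulmxA mul_adj_mx mul_scalar_mx.
by have := congr1 (fun M : 'M_N => `|M c r|) adjA; rewrite !mxE !normrM norm_conjC.
Qed.

End GramScalar.

Section Fourier.
Variable C : numClosedFieldType.
Variables (N : nat) (w : C).
Hypothesis w_prim : N.-primitive_root w.

Definition fourier_mx : 'M[C]_N := \matrix_(i, j) w ^+ (i * j).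

Lemma norm_prim_root : `|w| = 1.
Proof.
have N_gt0 := prim_order_gt0 w_prim.
apply/eqP; rewrite -(pexpr_eq1 N_gt0) ?normr_ge0 //.
by rewrite -normrX prim_expr_order // normr1.
Qed.

Lemma norm_fourier_mx i j : `|fourier_mx i j| = 1.
Proof. by rewrite mxE normrX norm_prim_root expr1n. Qed.

Lemma fourier_mx_gram : fourier_mx *m fourier_mx^t* = N%:R%:M.
Proof.
have conjE m : (w ^+ m)^* = (w ^+ m)^-1.
  by rewrite invC_norm normrX norm_prim_root !expr1n invr1 mul1r.
apply/matrixP => i j; rewrite !mxE.
under eq_bigr => k _ do rewrite !mxE conjE exprM (exprM _ j) -exprVn -exprMn.
have [<-|neq_ij] := eqVneq i j.
  rewrite divff; last by rewrite expf_neq0 // -normr_eq0 norm_prim_root oner_eq0.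
  by under eq_bigr => k _ do rewrite expr1n; rewrite sumr_const card_ord mulr1n.
rewrite mulr0n sum_expr_unity_root //.
  rewrite exprMn exprVn -!exprM !(mulnC _ N) !exprM (prim_expr_order w_prim).
  by rewrite !expr1n invr1 mulr1.
apply: contra_neq neq_ij => /divr1_eq /eqP; rewrite (eq_prim_root_expr w_prim).
by rewrite !modn_small // => /eqP/val_inj.
Qed.

Lemma sqr_norm_det_fourier_mx : `|\det fourier_mx| ^+ 2 = N%:R ^+ N.
Proof. exact/gram_scalar_norm_det/fourier_mx_gram. Qed.

Lemma sum_norm_cofactor_fourier_mx r :
  \sum_c `|cofactor fourier_mx r c| = `|\det fourier_mx|.
Proof.
have N_neq0 : (N%:R : C) != 0 by rewrite pnatr_eq0 -lt0n (prim_order_gt0 w_prim).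
apply: (mulfI N_neq0); rewrite mulr_sumr.
under eq_bigr => c _ do rewrite -[N%:R]ger0_norm ?ler0n //
  gram_scalar_norm_cofactor ?fourier_mx_gram // norm_fourier_mx mulr1.
by rewrite sumr_const card_ord mulr_natl.
Qed.

End Fourier.



Section SqrtPow.
Variable R : rcfType.

Lemma le_sqrtrX (x s : R) N :
  0 <= x -> 0 <= s -> s ^+ 2 <= x ^+ N -> s <= Num.sqrt x ^+ N.
Proof.
move=> x_ge0 s_ge0 sx; rewrite -(@ler_pXn2r _ 2) ?nnegrE ?exprn_ge0 ?sqrtr_ge0 //.
by rewrite -exprM mulnC exprM sqr_sqrtr.
Qed.

Lemma eq_sqrtrX (x s : R) N :
  0 <= x -> 0 <= s -> s ^+ 2 = x ^+ N -> s = Num.sqrt x ^+ N.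
Proof.
move=> x_ge0 s_ge0 sx; apply/eqP; rewrite -(@eqrXn2 _ 2) ?exprn_ge0 ?sqrtr_ge0 //.
by rewrite -exprM mulnC exprM sqr_sqrtr // sx.
Qed.

End SqrtPow.

Section CompoundInfNorm.
Variable R : realType.
Local Notation C := R[i].

Lemma cmodE (z : C) : ((cmod z)%:C)%C = `|z|.
Proof. by []. Qed.

Lemma sum_cmodE I (r : seq I) (P : pred I) (F : I -> C) :
  ((\sum_(i <- r | P i) cmod (F i))%:C)%C = \sum_(i <- r | P i) `|F i|.
Proof. exact: raddf_sum. Qed.

Lemma sum_cmod_ge0 I (r : seq I) (P : pred I) (F : I -> C) :
  0 <= \sum_(i <- r | P i) cmod (F i).
Proof. by rewrite -(@lecR R) sum_cmodE sumr_ge0. Qed.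

Lemma unit_cols_norm_le1 n (B : 'M[C]_n) i j : unit_cols B -> `|B i j| <= 1.
Proof.
move=> /(_ j) B_j; rewrite -cmodE -(rmorph1 (real_complex R)) lecR -B_j.
by have := le_bigmax 0 (fun k => cmod (col j B k 0)) i; rewrite mxE.
Qed.

Lemma unimodular_unit_cols n (B : 'M[C]_n) :
  (0 < n)%N -> (forall i j, `|B i j| = 1) -> unit_cols B.
Proof.
move=> n_gt0 B1 j; have cmodB i : cmod (col j B i 0) = 1.
  by apply: (@complexI R); rewrite cmodE mxE B1.
apply: le_anti; rewrite (bigmax_le _ ler01) => [|i _]; last by rewrite cmodB.
by have := le_bigmax 0 (fun i => cmod (col j B i 0)) (Ordinal n_gt0); rewrite cmodB.
Qed.

Lemma minor_setC1 n (B : 'M[C]_n) r c :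
  minor n.-1 B [set~ r] [set~ c] = \det (row' r (col' c B)).
Proof.
rewrite /minor !enum_setC1; congr (\det _); apply/matrixP => i j; rewrite !mxE.
rewrite -map_comp (nth_map i) ?size_enum_ord // nth_ord_enum /=.
by rewrite -map_comp (nth_map j) ?size_enum_ord // nth_ord_enum.
Qed.

Lemma compound_predn_row_sum n (B : 'M[C]_n) i : (0 < n)%N ->
  exists r, \sum_j cmod (compound n.-1 B i j) = \sum_c cmod (cofactor B r c).
Proof.
move=> n_gt0; have : enum_val i \in [set [set~ c] | c : 'I_n].
  by rewrite -ksets_predn // enum_valP.
case/imsetP => r _ i_r; exists r.
transitivity (\sum_(b in ksets n n.-1) cmod (minor n.-1 B (enum_val i) b)).
  by rewrite [RHS]big_enum_val; apply: eq_bigr => j _; rewrite mxE.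
rewrite i_r ksets_predn // big_imset /=; last by move=> c c' _ _ /setC_inj/set1_inj.
apply: eq_bigr => c _; rewrite minor_setC1; apply: (@complexI R).
by rewrite !cmodE /cofactor normrM normrX normrN1 expr1n mul1r.
Qed.

Lemma mxnorm_inf_compound_le n (B : 'M[C]_n) t : (0 < n)%N -> 0 <= t ->
  (forall r, \sum_c cmod (cofactor B r c) <= t) -> mxnorm_inf (compound n.-1 B) <= t.
Proof.
move=> n_gt0 t_ge0 B_t; apply: bigmax_le => // i _.
by have [r ->] := compound_predn_row_sum B i n_gt0.
Qed.

Lemma mxnorm_inf_compound_eq n (B : 'M[C]_n) t : (0 < n)%N ->
  (forall r, \sum_c cmod (cofactor B r c) = t) -> mxnorm_inf (compound n.-1 B) = t.
Proof.
move=> n_gt0 B_t; have t_ge0 : 0 <= t.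
  by rewrite -(B_t (Ordinal n_gt0)) sum_cmod_ge0.
apply: le_anti; rewrite mxnorm_inf_compound_le // => [|r]; last by rewrite B_t.
have card_gt0 : (0 < #|ksets n n.-1|)%N.
  by apply/card_gt0P; exists [set~ Ordinal n_gt0]; rewrite inE cardsC1 card_ord.
have [r row_r] := compound_predn_row_sum B (Ordinal card_gt0) n_gt0.
by rewrite -(B_t r) -row_r; exact: (le_bigmax 0 (fun i => \sum_j cmod (compound n.-1 B i j))).
Qed.

Lemma sqr_sum_cmod_cofactor_le n (B : 'M[C]_n) r : (forall i j, `|B i j| <= 1) ->
  (\sum_c cmod (cofactor B r c)) ^+ 2 <= n%:R ^+ n.
Proof.
move=> B_le1; rewrite -(@lecR R) rmorphXn /= sum_cmodE rmorphXn /= rmorph_nat.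
exact: sum_norm_cofactor_le.
Qed.

Lemma sqr_sum_cmod_cofactor_fourier_mx n (w : C) r : n.-primitive_root w ->
  (\sum_c cmod (cofactor (fourier_mx n w) r c)) ^+ 2 = n%:R ^+ n.
Proof.
move=> w_prim; apply: (@complexI R); rewrite rmorphXn /= sum_cmodE rmorphXn /= rmorph_nat.
by rewrite sum_norm_cofactor_fourier_mx // sqr_norm_det_fourier_mx.
Qed.

End CompoundInfNorm.

Theorem theorem2p11 (R : realType) (n : nat) (hn : (2 <= n)%N) :
  (forall B : 'M[R[i]]_n, unit_cols B ->
     mxnorm_inf (compound n.-1 B) <= Num.sqrt (n%:R : R) ^+ n) /\
  (exists B : 'M[R[i]]_n, unit_cols B /\
     mxnorm_inf (compound n.-1 B) = Num.sqrt (n%:R : R) ^+ n).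
Proof.
have n_gt0 : (0 < n)%N by apply: leq_trans hn.
split=> [B B_unit|].
  apply: mxnorm_inf_compound_le; rewrite ?exprn_ge0 ?sqrtr_ge0 // => r.
  apply: le_sqrtrX; rewrite ?ler0n ?sum_cmod_ge0 //.
  by apply: sqr_sum_cmod_cofactor_le => i j; apply: unit_cols_norm_le1.
have [w w_prim] : exists w : R[i], n.-primitive_root w.
  by apply: prim_root_exists; rewrite pnatr_eq0 -lt0n.
exists (fourier_mx n w); split.
  by apply: unimodular_unit_cols => // i j; apply: norm_fourier_mx.
apply: mxnorm_inf_compound_eq => // r; apply: eq_sqrtrX; rewrite ?ler0n ?sum_cmod_ge0 //.
exact: sqr_sum_cmod_cofactor_fourier_mx.
Qed.
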